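(* Consider the stochastic MPC scheme described in the context, with i.i.d. zero-mean disturbances $w(k)$, $\mathbb{E}(w(k))=0$, $\mathrm{var}(w(k))=\Sigma^w$ for all $0\le k\le\bar N$, quadratic costs $l_k(x,u)=\|x\|_Q^2+\|u\|_R^2$ for all $k$ and $l_f(x)=\|x\|_P^2$ with $Q\succeq0$, $R\succ0$, and $P$ the solution of the Lyapunov equation $(A+BK)^\top P(A+BK)-P=-(Q+K^\top RK)$. Let $J^*(x,z)$ denote the optimal cost of problem $(\mathcal{P}_k)$ with initial measured state $x_0=x$ and nominal initial state $z_0=z$. Then, under the control law $u(k)=Ke_0(k)+v_0^*(k)$, $$\mathbb{E}\big(J^*(x(k+1),z(k+1))-J^*(x(k),z(k))\,\big|\,x(k),z(k)\big)\le-\|x(k)\|_Q^2-\|u(k)\|_R^2+\mathrm{tr}(P\Sigma^w).$$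
   Context: $\|x\|_P=\sqrt{x^\top Px}$. System: $x(k+1)=Ax(k)+Bu(k)+w(k)$, $x\in\mathbb{R}^{n_x}$, $u\in\mathbb{R}^{n_u}$, finite horizon $\bar N$. $\mathcal{X},\mathcal{U}$ convex sets; $\mathcal{A}\ominus\mathcal{B}=\{a\in\mathcal{A}: a+b\in\mathcal{A}\ \forall b\in\mathcal{B}\}$. A fixed stabilizing gain $K\in\mathbb{R}^{n_u\times n_x}$ is given; $\mathcal{R}^x_k,\mathcal{R}^u_k$ ($0\le k\le\bar N$) are given tightening sets; $\mathcal{R}_f$ is a set with $\mathcal{R}_f\supseteq\bigcup_k\mathcal{R}^x_k$, $K\mathcal{R}_f\supseteq\bigcup_k\mathcal{R}^u_k$, and the terminal set $\mathcal{Z}_f$ satisfies $\mathcal{Z}_f\subseteq\mathcal{X}\ominus\mathcal{R}_f$, $(A+BK)\mathcal{Z}_f\subseteq\mathcal{Z}_f$, $K\mathcal{Z}_f\subseteq\mathcal{U}\ominus K\mathcal{R}_f$. Problem $(\mathcal{P}_k)$ at time $k$: minimize over $v_0,\dots,v_{N-1}$ the cost $\mathbb{E}_{W_k}\big(l_f(x_N)+\sum_{i=0}^{N-1}l_{k+i}(x_i,u_i)\big)$ subject to $x_i=z_i+e_i$, $u_i=Ke_i+v_i$, $z_{i+1}=Az_i+Bv_i$, $e_{i+1}=(A+BK)e_i+w_i$, where $W_k=[w_0^\top,\dots,w_N^\top]^\top$ has the conditional distribution of $[w(k)^\top,\dots,w(k+N)^\top]^\top$ given the realized $w(0),\dots,w(k-1)$;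 constraints $z_i\in\mathcal{X}\ominus\mathcal{R}^x_{i+k}$, $v_i\in\mathcal{U}\ominus\mathcal{R}^u_{i+k}$ ($i=0,\dots,N-1$), $z_N\in\mathcal{Z}_f$; initialization $x_0=x(k)$, $z_0=z_1(k-1)$ (with $z_0(0)=x(0)$), $e_0=x_0-z_0$. Closed-loop nominal state $z(k)=z_0(k)$; applied input $u(k)=Ke_0(k)+v_0^*(k)$ with $v^*(k)$ optimal for $(\mathcal{P}_k)$. *)

From HB Require Import structures.
From mathcomp Require Import all_boot all_order all_algebra.
From mathcomp Require Import all_classical all_reals all_analysis.
Set Implicit Arguments. Unset Strict Implicit. Unset Printing Implicit Defensive.
Import Order.TTheory GRing.Theory Num.Theory.
Import numFieldNormedType.Exports.
Local Open Scope classical_set_scope.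
Local Open Scope ring_scope.

Section Defs.
Variable R : realType.

Definition qf n (P : 'M[R]_n) (x : 'cV[R]_n) : R := ((x^T *m P *m x) 0 0).

Definition psd n (Q : 'M[R]_n) : Prop := Q^T = Q /\ forall x, 0 <= qf Q x.
Definition pd n (Q : 'M[R]_n) : Prop := Q^T = Q /\ forall x, x != 0 -> 0 < qf Q x.

Definition schur_stable n (Phi : 'M[R]_n) : Prop :=
  forall i j, ((fun t : nat => (Phi ^+ t) i j) : R^nat) @ \oo --> (0 : R).

Definition pdiff n (A B : set 'cV[R]_n) : set 'cV[R]_n :=
  [set a | A a /\ forall b, B b -> A (a + b)].

Definition mximg m n (K : 'M[R]_(m, n)) (S : set 'cV[R]_n) : set 'cV[R]_m :=
  (fun z => K *m z) @` S.

Definition vec_measurable n : set (set 'cV[R]_n) :=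
  <<s [set C : set 'cV[R]_n | exists (i : 'I_n) (B : set R), measurable B /\
                 C = [set v : 'cV[R]_n | B (v i 0)]] >>.

Section Prob.
Context (d : measure_display) (T : measurableType d).

Definition sigma_of n (Y : T -> 'cV[R]_n) : set (set T) :=
  <<s [set A : set T | exists (i : 'I_n) (B : set R), measurable B /\
                 A = [set w | B (Y w i 0)]] >>.

Definition rand_vec n (Y : T -> 'cV[R]_n) : Prop :=
  forall i, measurable_fun setT (fun w => Y w i 0).

Definition mutually_independent (P : probability T R) n
    (W : nat -> T -> 'cV[R]_n) : Prop :=
  forall (s : seq nat) (A : nat -> set T), uniq s ->
    (forall j, j \in s -> sigma_of (W j) (A j)) ->
    P (\big[setI/setT]_(j <- s) A j) = (\prod_(j <- s) P (A j))%E.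

Definition identically_distributed (P : probability T R) n
    (W : nat -> T -> 'cV[R]_n) : Prop :=
  forall j (C : set 'cV[R]_n), vec_measurable C ->
    P (W j @^-1` C) = P (W 0%N @^-1` C).

Definition mean0_cov (P : probability T R) n (W : nat -> T -> 'cV[R]_n)
    (Sigma : 'M[R]_n) : Prop :=
  forall k, (forall i, P.-integrable setT (fun w => (W k w i 0)%:E) /\
                       P.-integrable setT (fun w => ((W k w i 0) ^+ 2)%:E) /\
                       (\int[P]_w (W k w i 0)%:E = 0)%E) /\
            (forall i j, (\int[P]_w ((W k w i 0) * (W k w j 0))%:E = (Sigma i j)%:E)%E).

Variables (nx nu : nat) (A : 'M[R]_nx) (B : 'M[R]_(nx, nu)) (K : 'M[R]_(nu, nx)).
Variables (Q P : 'M[R]_nx) (Rw : 'M[R]_nu) (N : nat).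
Variables (W : nat -> T -> 'cV[R]_nx) (Pr : probability T R).

Fixpoint znom (z0 : 'cV[R]_nx) (v : nat -> 'cV[R]_nu) (i : nat) : 'cV[R]_nx :=
  match i with
  | 0 => z0
  | i'.+1 => A *m znom z0 v i' + B *m v i'
  end.

(* error prediction e_i at time k, disturbances w_i = W (k+i) *)
Fixpoint epred (k : nat) (e0 : 'cV[R]_nx) (w : T) (i : nat) : 'cV[R]_nx :=
  match i with
  | 0 => e0
  | i'.+1 => (A + B *m K) *m epred k e0 w i' + W (k + i') w
  end.

Definition sample_cost k (x z : 'cV[R]_nx) (v : nat -> 'cV[R]_nu) (w : T) : R :=
  let e := epred k (x - z) w in
  let xi i := znom z v i + e i in
  let ui i := K *m e i + v i in
  qf P (xi N) + \sum_(i < N) (qf Q (xi i) + qf Rw (ui i)).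

Definition Jcost k (x z : 'cV[R]_nx) (v : nat -> 'cV[R]_nu) : \bar R :=
  (\int[Pr]_w (sample_cost k x z v w)%:E)%E.

Variables (X : set 'cV[R]_nx) (U : set 'cV[R]_nu)
          (Rx : nat -> set 'cV[R]_nx) (Ru : nat -> set 'cV[R]_nu)
          (Zf : set 'cV[R]_nx).

Definition feasible k (z : 'cV[R]_nx) (v : nat -> 'cV[R]_nu) : Prop :=
  (forall i, (i < N)%N ->
     pdiff X (Rx (i + k)) (znom z v i) /\ pdiff U (Ru (i + k)) (v i)) /\
  Zf (znom z v N).

(* optimal cost J*_k(x, z) (+oo if infeasible) *)
Definition Jstar k (x z : 'cV[R]_nx) : \bar R :=
  ereal_inf [set Jcost k x z v | v in feasible k z].

End Prob.
End Defs.

From HB Require Import structures.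
From mathcomp Require Import all_boot all_order all_algebra.
From mathcomp Require Import all_classical all_reals all_analysis.
From mathcomp Require Import measurable_realfun ring lra.
Set Implicit Arguments. Unset Strict Implicit. Unset Printing Implicit Defensive.
Import Order.TTheory GRing.Theory Num.Theory.
Import numFieldNormedType.Exports.
Local Open Scope classical_set_scope.
Local Open Scope ring_scope.

(* The shifted optimal input sequence, closed at its last step by the feedback
   K, is feasible at time k+1, since Zf is (A+BK)-invariant and Rx, Ru lie in
   Rf, K Rf.  For any inputs v the cost of (P_k) splits into the deterministic
   cost of the mean trajectory z_i + (A+BK)^i e_0, K (A+BK)^i e_0 + v_i, and
   trace terms in the covariances of the propagated noise; these do not
   depend on k, because independent disturbances are uncorrelated and all
   have covariance Sigma.  For the candidate, the mean trajectory from the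
   next state is the old one shifted by one step, and the Lyapunov equation
   turns the new terminal cost into the old one, so the deterministic part
   drops by exactly |x|_Q^2 + |u|_R^2.  Averaging over w(k) adds the noise
   injected at step k, whose propagation (A+BK)^i Sigma (A+BK)^iT costs
   exactly tr(P Sigma) over the horizon, again by the Lyapunov equation. *)

Section le_integral_pointwise.
Context d (T : measurableType d) (R : realType) (mu : {measure set T -> \bar R}).
Local Open Scope ereal_scope.

(* No measurability is needed: both parts of the integral are suprema over
   simple functions below the positive and negative parts. *)
Lemma le_integral_pointwise (f g : T -> \bar R) : (forall x, f x <= g x) ->
  \int[mu]_x f x <= \int[mu]_x g x.
Proof.
move=> fg; rewrite /integral.
apply: leeB; apply: ereal_sup_le => _ [h hf <-]; exists h => //= x;
  apply: (le_trans (hf x)); rewrite ?funeposE ?funenegE /patch /= ?in_setT /=.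
- exact: le_max2.
- by apply: le_max2 => //; rewrite leeN2.
Qed.

End le_integral_pointwise.

Section independent_product.
Context (R : realType) d (T : measurableType d) (Pr : probability T R).
Variables (X Y : T -> R).
Hypotheses (mX : measurable_fun setT X) (mY : measurable_fun setT Y).
Hypotheses (XY1 : X \* Y \in Lfun Pr 1) (Y1 : Y \in Lfun Pr 1).
Hypothesis EY0 : ('E_Pr[Y] = 0)%E.
Hypothesis indepXY : forall B1 B2, measurable B1 -> measurable B2 ->
  Pr (X @^-1` B1 `&` Y @^-1` B2) = (Pr (X @^-1` B1) * Pr (Y @^-1` B2))%E.

Let XRV : {RV Pr >-> R} := HB.pack X (isMeasurableFun.Build _ _ _ _ _ mX).
Let YRV : {RV Pr >-> R} := HB.pack Y (isMeasurableFun.Build _ _ _ _ _ mY).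
Let XY := fun w => (X w, Y w).
Let XYRV : {RV Pr >-> (R * R)%type} :=
  HB.pack XY (isMeasurableFun.Build _ _ _ _ _ (measurable_fun_pair mX mY)).
Let mul_pair := fun p : R * R => (p.1 * p.2)%:E.

Let joint_law_prod A : measurable A ->
  (distribution Pr XRV \x distribution Pr YRV)%E A = distribution Pr XYRV A.
Proof.
apply: product_measure_unique => B1 B2 mB1 mB2.
by rewrite /distribution /pushforward /= -indepXY.
Qed.

Let measurable_mul_pair : measurable_fun setT mul_pair.
Proof. by apply/measurable_EFinP; apply: measurable_funM. Qed.

Let integrable_mul_pair :
  (distribution Pr XRV \x distribution Pr YRV)%E.-integrable setT mul_pair.
Proof.
apply/integrableP; split => //.
rewrite (eq_measure_integral (distribution Pr XYRV)); last first.
  by move=> A mA _; exact: joint_law_prod.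
rewrite ge0_integral_distribution //; last exact: measurableT_comp.
by move/Lfun1_integrable: XY1 => /integrableP[].
Qed.

Lemma expectationM_indep_mean0 : ('E_Pr[X \* Y] = 0)%E.
Proof.
rewrite unlock.
have -> : (\int[Pr]_w ((X \* Y) w)%:E = \int[Pr]_w (mul_pair \o XYRV) w)%E by [].
rewrite -integral_distribution //; last exact/Lfun1_integrable.
rewrite (eq_measure_integral (distribution Pr XRV \x distribution Pr YRV)%E);
  last by move=> A mA _; exact/esym/joint_law_prod.
rewrite -(integral12_prod_meas1 integrable_mul_pair).
have EY0_law : (\int[distribution Pr YRV]_y (y%:E) = 0)%E.
  rewrite integral_distribution //; last exact/Lfun1_integrable.
  by move: EY0; rewrite unlock.
have Y_law_integrable :
    (distribution Pr YRV).-integrable setT (fun y : R => y%:E).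
  apply: integrable_pushforward => //; first exact/measurable_EFinP.
  exact/Lfun1_integrable.
rewrite -[RHS](integral0 (distribution Pr XRV) setT).
apply: eq_integral => x _; rewrite /fubini_F /mul_pair /=.
under eq_integral do rewrite EFinM.
by rewrite integralZl // EY0_law mule0.
Qed.

End independent_product.

Section Lfun_closure.
Context d (T : measurableType d) (R : realType).
Variables (mu : {finite_measure set T -> \bar R}) (r : R) (r1 : 1 <= r).
Local Notation Lr := (Lfun mu r%:E).

Lemma LfunD (f g : T -> R) : f \in Lr -> g \in Lr -> f \+ g \in Lr.
Proof.
have r1E : (1 <= r%:E)%E by rewrite lee_fin.
exact: (Lfun_addr_closed mu r1E).2.
Qed.

Lemma LfunZ (k : R) (f : T -> R) : f \in Lr -> (fun w => k * f w) \in Lr.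
Proof.
have -> : (fun w => k * f w) = k \o* f by apply/funext => w; rewrite /= mulrC.
exact: Lfun_scale.
Qed.

Lemma Lfun_sum (I : Type) (s : seq I) (F : I -> T -> R) :
  (forall i, F i \in Lr) -> (fun w => \sum_(i <- s) F i w) \in Lr.
Proof.
move=> FLr; elim: s => [|i s IHs].
  rewrite (_ : (fun _ => _) = cst 0); first exact: Lfun_cst.
  by apply/funext => w; rewrite big_nil.
rewrite (_ : (fun _ => _) = F i \+ fun w => \sum_(j <- s) F j w).
  exact: LfunD.
by apply/funext => w; rewrite big_cons.
Qed.

End Lfun_closure.

Section real_expectation.
Context (R : realType) d (T : measurableType d) (Pr : probability T R).
Local Notation L1 := (Lfun Pr 1).

Definition expectR (f : T -> R) : R := fine ('E_Pr[f])%E.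

Lemma expectRE f : f \in L1 -> ('E_Pr[f])%E = (expectR f)%:E.
Proof. by move=> f1; rewrite fineK // expectation_fin_num. Qed.

Lemma Lfun2_sub_Lfun1 : {subset Lfun Pr 2%:E <= L1}.
Proof. by apply: Lfun_subset12; rewrite fin_num_measure. Qed.

Lemma integral_expectR f : f \in L1 ->
  (\int[Pr]_w (f w)%:E)%E = (expectR f)%:E.
Proof. by move=> f1; rewrite -expectRE // unlock. Qed.

Lemma eq_expectR f g : f =1 g -> expectR f = expectR g.
Proof. by move=> /funext ->. Qed.

Lemma expectR_cst c : expectR (cst c) = c.
Proof. by rewrite /expectR expectation_cst. Qed.

Lemma expectRD f g : f \in L1 -> g \in L1 ->
  expectR (f \+ g) = expectR f + expectR g.
Proof.
move=> f1 g1; apply: EFin_inj.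
by rewrite EFinD -!expectRE ?expectationD //; exact: LfunD.
Qed.

Lemma expectRZ k f : f \in L1 -> expectR (fun w => k * f w) = k * expectR f.
Proof.
move=> f1; apply: EFin_inj; rewrite EFinM -!expectRE //; last exact: LfunZ.
rewrite -expectationZl //; congr ('E_Pr[_])%E.
by apply/funext => w; rewrite /= mulrC.
Qed.

Lemma expectR_sum (I : Type) (s : seq I) (F : I -> T -> R) :
  (forall i, F i \in L1) ->
  expectR (fun w => \sum_(i <- s) F i w) = \sum_(i <- s) expectR (F i).
Proof.
move=> F1; elim: s => [|i s IHs].
  by under eq_fun do rewrite big_nil; rewrite expectR_cst big_nil.
under eq_fun do rewrite big_cons.
by rewrite expectRD ?big_cons ?IHs //; exact: Lfun_sum.
Qed.

End real_expectation.

Section random_vectors.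
Context (R : realType) d (T : measurableType d) (Pr : probability T R).
Local Notation L1 := (Lfun Pr 1).
Local Notation L2 := (Lfun Pr 2%:E).
Local Notation E := (expectR Pr).

Let ler12 : 1 <= 2 :> R. Proof. by rewrite ler1n. Qed.

Definition sqintegrable m (V : T -> 'cV[R]_m) :=
  forall a, (fun w => V w a 0) \in L2.

Definition mean m (V : T -> 'cV[R]_m) : 'cV[R]_m := \col_a E (fun w => V w a 0).

Definition cross_moment m n (V1 : T -> 'cV[R]_m) (V2 : T -> 'cV[R]_n) :
  'M[R]_(m, n) := \matrix_(a, b) E (fun w => V1 w a 0 * V2 w b 0).

Lemma sqintegrable_cst m (c : 'cV[R]_m) : sqintegrable (fun _ => c).
Proof. by move=> a; exact: Lfun_cst. Qed.

Lemma sqintegrableD m (V1 V2 : T -> 'cV[R]_m) :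
  sqintegrable V1 -> sqintegrable V2 -> sqintegrable (fun w => V1 w + V2 w).
Proof.
move=> V1sq V2sq a; under eq_fun do rewrite mxE.
exact: LfunD.
Qed.

Lemma sqintegrableMl m n (L : 'M[R]_(n, m)) (V : T -> 'cV[R]_m) :
  sqintegrable V -> sqintegrable (fun w => L *m V w).
Proof.
move=> Vsq a; under eq_fun do rewrite mxE.
by apply: Lfun_sum => // c; exact: LfunZ.
Qed.

Lemma Lfun1_entry_mul m n (V1 : T -> 'cV[R]_m) (V2 : T -> 'cV[R]_n) a b :
  sqintegrable V1 -> sqintegrable V2 -> (fun w => V1 w a 0 * V2 w b 0) \in L1.
Proof. by move=> V1sq V2sq; exact: Lfun2_mul_Lfun1. Qed.

Lemma mean_cst m (c : 'cV[R]_m) : mean (fun _ => c) = c.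
Proof. by apply/matrixP => a b; rewrite mxE expectR_cst (ord1 b). Qed.

Lemma meanD m (V1 V2 : T -> 'cV[R]_m) : sqintegrable V1 -> sqintegrable V2 ->
  mean (fun w => V1 w + V2 w) = mean V1 + mean V2.
Proof.
move=> V1sq V2sq; apply/matrixP => a b; rewrite !mxE.
under eq_expectR do rewrite mxE.
by rewrite expectRD //; exact: Lfun2_sub_Lfun1.
Qed.

Lemma meanMl m n (L : 'M[R]_(n, m)) (V : T -> 'cV[R]_m) : sqintegrable V ->
  mean (fun w => L *m V w) = L *m mean V.
Proof.
move=> Vsq; apply/matrixP => a b; rewrite !mxE.
under eq_expectR do rewrite mxE.
rewrite expectR_sum => [|c]; last exact/LfunZ/Lfun2_sub_Lfun1.
by apply: eq_bigr => c _; rewrite expectRZ ?mxE //; exact: Lfun2_sub_Lfun1.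
Qed.

Lemma cross_momentC m n (V1 : T -> 'cV[R]_m) (V2 : T -> 'cV[R]_n) :
  cross_moment V2 V1 = (cross_moment V1 V2)^T.
Proof.
by apply/matrixP => a b; rewrite !mxE; apply: eq_expectR => w; exact: mulrC.
Qed.

Lemma cross_momentDl m n (V1 V : T -> 'cV[R]_m) (V2 : T -> 'cV[R]_n) :
  sqintegrable V1 -> sqintegrable V -> sqintegrable V2 ->
  cross_moment (fun w => V1 w + V w) V2 = cross_moment V1 V2 + cross_moment V V2.
Proof.
move=> V1sq Vsq V2sq; apply/matrixP => a b; rewrite !mxE.
under eq_expectR do rewrite mxE mulrDl.
by rewrite expectRD //; exact: Lfun1_entry_mul.
Qed.

Lemma cross_momentDr m n (V1 : T -> 'cV[R]_m) (V2 V : T -> 'cV[R]_n) :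
  sqintegrable V1 -> sqintegrable V2 -> sqintegrable V ->
  cross_moment V1 (fun w => V2 w + V w) = cross_moment V1 V2 + cross_moment V1 V.
Proof.
move=> V1sq V2sq Vsq; apply/matrixP => a b; rewrite !mxE.
under eq_expectR do rewrite mxE mulrDr.
by rewrite expectRD //; exact: Lfun1_entry_mul.
Qed.

Lemma cross_momentMl m n p (L : 'M[R]_(p, m)) (V1 : T -> 'cV[R]_m)
    (V2 : T -> 'cV[R]_n) : sqintegrable V1 -> sqintegrable V2 ->
  cross_moment (fun w => L *m V1 w) V2 = L *m cross_moment V1 V2.
Proof.
move=> V1sq V2sq; apply/matrixP => a b; rewrite !mxE.
under eq_expectR do rewrite mxE mulr_suml.
rewrite expectR_sum => [|c]; last first.
  by under eq_fun do rewrite -mulrA; exact/LfunZ/Lfun1_entry_mul.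
apply: eq_bigr => c _; rewrite mxE -expectRZ; last exact: Lfun1_entry_mul.
by apply: eq_expectR => w; rewrite mulrA.
Qed.

Lemma cross_moment_cstl m n (c : 'cV[R]_m) (V : T -> 'cV[R]_n) :
  sqintegrable V -> cross_moment (fun _ => c) V = c *m (mean V)^T.
Proof.
move=> Vsq; apply/matrixP => a b; rewrite !mxE big_ord1 !mxE.
by rewrite expectRZ //; exact: Lfun2_sub_Lfun1.
Qed.

Lemma cross_momentMr m n p (L : 'M[R]_(p, n)) (V1 : T -> 'cV[R]_m)
    (V2 : T -> 'cV[R]_n) : sqintegrable V1 -> sqintegrable V2 ->
  cross_moment V1 (fun w => L *m V2 w) = cross_moment V1 V2 *m L^T.
Proof.
move=> V1sq V2sq.
by rewrite cross_momentC cross_momentMl // trmx_mul cross_momentC trmxK.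
Qed.

Lemma cross_moment_cstr m n (V : T -> 'cV[R]_m) (c : 'cV[R]_n) :
  sqintegrable V -> cross_moment V (fun _ => c) = mean V *m c^T.
Proof.
by move=> Vsq; rewrite cross_momentC cross_moment_cstl // trmx_mul trmxK.
Qed.

Lemma qf_sum m (S : 'M[R]_m) (v : 'cV[R]_m) :
  qf S v = \sum_a \sum_b S a b * (v a 0 * v b 0).
Proof.
rewrite /qf mxE exchange_big /=; apply: eq_bigr => b _.
rewrite mxE mulr_suml; apply: eq_bigr => a _; rewrite mxE.
by rewrite mulrCA mulrA [v a 0 * _]mulrC -!mulrA.
Qed.

Lemma Lfun1_qf m (S : 'M[R]_m) (V : T -> 'cV[R]_m) :
  sqintegrable V -> (fun w => qf S (V w)) \in L1.
Proof.
move=> Vsq; under eq_fun do rewrite qf_sum.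
apply: Lfun_sum => // a; apply: Lfun_sum => // b.
exact/LfunZ/Lfun1_entry_mul.
Qed.

Lemma expectR_qf m (S : 'M[R]_m) (V : T -> 'cV[R]_m) : sqintegrable V ->
  E (fun w => qf S (V w)) = \tr (S *m cross_moment V V).
Proof.
move=> Vsq; under eq_expectR do rewrite qf_sum.
rewrite expectR_sum => [|a]; last first.
  by apply: Lfun_sum => // b; exact/LfunZ/Lfun1_entry_mul.
apply: eq_bigr => a _; rewrite mxE expectR_sum => [|b]; last first.
  exact/LfunZ/Lfun1_entry_mul.
apply: eq_bigr => b _; rewrite expectRZ ?mxE; last exact: Lfun1_entry_mul.
by congr (_ * _); apply: eq_expectR => w; exact: mulrC.
Qed.

Lemma mxtrace_qf m (S : 'M[R]_m) (c : 'cV[R]_m) : \tr (S *m (c *m c^T)) = qf S c.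
Proof. by rewrite mulmxA mxtrace_mulC mulmxA /mxtrace big_ord1. Qed.

Lemma expectR_qf_centered m (S : 'M[R]_m) (c : 'cV[R]_m) (Y : T -> 'cV[R]_m) :
  sqintegrable Y -> mean Y = 0 ->
  E (fun w => qf S (c + Y w)) = qf S c + \tr (S *m cross_moment Y Y).
Proof.
move=> Ysq Y0; have csq := sqintegrable_cst c.
rewrite expectR_qf; last exact: sqintegrableD.
rewrite cross_momentDl ?cross_momentDr ?(cross_momentDr (V1 := Y)) //;
  try exact: sqintegrableD.
rewrite cross_moment_cstl // mean_cst cross_moment_cstl // Y0 trmx0 mulmx0.
rewrite cross_moment_cstr // Y0 mul0mx addr0 add0r.
by rewrite mulmxDr mxtraceD mxtrace_qf.
Qed.

End random_vectors.

Lemma integrable_sqr_Lfun2 (R : realType) d (T : measurableType d)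
    (mu : {measure set T -> \bar R}) (f : T -> R) :
  measurable_fun setT f -> mu.-integrable setT (fun w => (f w ^+ 2)%:E) ->
  f \in Lfun mu 2%:E.
Proof.
move=> mf /integrableP[_ If].
rewrite inE; apply/andP; split; first by rewrite inE.
rewrite !inE /= /finite_norm unlock /Lnorm; apply: poweR_lty.
apply: le_lt_trans If; apply: ge0_le_integral => //.
- by move=> x _; rewrite lee_fin powR_ge0.
- apply/measurable_EFinP.
  by apply: (@measurableT_comp _ _ _ _ _ _ (fun x : R => x `^ 2)) => //;
    exact: measurableT_comp.
- apply: measurableT_comp => //; apply/measurable_EFinP.
  exact: measurable_funX.
- by move=> x _; rewrite lee_fin powR_mulrn ?normr_ge0 // normrX.
Qed.

Section disturbance.
Context (R : realType) d (T : measurableType d) (Pr : probability T R).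
Variables (nx : nat) (W : nat -> T -> 'cV[R]_nx) (Sigma : 'M[R]_nx).
Hypotheses (Wrv : forall k, rand_vec (W k)) (Wcov : mean0_cov Pr W Sigma).

Lemma sqintegrable_disturbance j : sqintegrable Pr (W j).
Proof.
move=> a; apply: integrable_sqr_Lfun2; first exact: Wrv.
by have [/(_ a) [_ [? _]] _] := Wcov j.
Qed.

Lemma mean_disturbance j : mean Pr (W j) = 0.
Proof.
apply/matrixP => a b; rewrite !mxE /expectR unlock.
by have [/(_ a) [_ [_ ->]] _] := Wcov j.
Qed.

Lemma cross_moment_disturbance j : cross_moment Pr (W j) (W j) = Sigma.
Proof.
apply/matrixP => a b; rewrite !mxE /expectR unlock.
by have [_ ->] := Wcov j.
Qed.

Lemma cross_moment_disturbance_indep j l : mutually_independent Pr W ->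
  j != l -> cross_moment Pr (W j) (W l) = 0.
Proof.
move=> Wind jl; apply/matrixP => a b; rewrite !mxE.
have Wja := sqintegrable_disturbance j a.
have Wlb := sqintegrable_disturbance l b.
rewrite /expectR (@expectationM_indep_mean0 _ _ _ Pr (fun w => W j w a 0)
  (fun w => W l w b 0)) //.
- exact: Wrv.
- exact: Wrv.
- exact: Lfun2_mul_Lfun1.
- exact: Lfun2_sub_Lfun1.
- have /matrixP/(_ b 0) := mean_disturbance l; rewrite !mxE => El0.
  by rewrite expectRE ?El0 //; exact: Lfun2_sub_Lfun1.
- move=> B1 B2 mB1 mB2.
  pose S n := if n == j then (fun w => W j w a 0) @^-1` B1
              else (fun w => W l w b 0) @^-1` B2.
  have lj : (l == j) = false by rewrite eq_sym (negbTE jl).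
  have := Wind [:: j; l] S.
  rewrite /= inE jl !big_cons !big_nil /S eqxx lj setIT mule1; apply => //.
  move=> i; rewrite !inE => /orP[/eqP -> | /eqP ->]; rewrite /S ?eqxx ?lj.
    by apply: sub_gen_smallest; exists a, B1.
  by apply: sub_gen_smallest; exists b, B2.
Qed.

End disturbance.

Section noise_propagation.
Context (R : realType) d (T : measurableType d) (Pr : probability T R).
Variables (nx : nat) (W : nat -> T -> 'cV[R]_nx) (Sigma Phi : 'M[R]_nx).
Hypothesis Wsq : forall j, sqintegrable Pr (W j).
Hypothesis W0 : forall j, mean Pr (W j) = 0.
Hypotheses (WSigma : forall j, cross_moment Pr (W j) (W j) = Sigma).
Hypothesis Wuncorr : forall j l, j != l -> cross_moment Pr (W j) (W l) = 0.

Fixpoint acc_noise (k i : nat) (w : T) : 'cV[R]_nx :=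
  if i is i'.+1 then Phi *m acc_noise k i' w + W (k + i') w else 0.

Fixpoint acc_cov (i : nat) : 'M[R]_nx :=
  if i is i'.+1 then Phi *m acc_cov i' *m Phi^T + Sigma else 0.

Lemma sqintegrable_acc_noise k i : sqintegrable Pr (acc_noise k i).
Proof.
elim: i => [|i IHi] /=; first exact: sqintegrable_cst.
by apply: sqintegrableD => //; exact: sqintegrableMl.
Qed.

Lemma mean_acc_noise k i : mean Pr (acc_noise k i) = 0.
Proof.
elim: i => [|i IHi] /=; first exact: mean_cst.
rewrite meanD ?meanMl ?IHi ?W0 ?mulmx0 ?addr0 //.
  exact: sqintegrable_acc_noise.
exact/sqintegrableMl/sqintegrable_acc_noise.
Qed.

Lemma cross_moment_acc_noise_future k i m : (k + i <= m)%N ->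
  cross_moment Pr (acc_noise k i) (W m) = 0.
Proof.
have Zsq := sqintegrable_acc_noise k.
elim: i => [|i IHi] /= kim; first by rewrite cross_moment_cstl ?mul0mx.
rewrite cross_momentDl ?cross_momentMl ?IHi ?mulmx0 ?add0r //.
- by apply: Wuncorr; rewrite neq_ltn -addnS kim.
- by rewrite (leq_trans _ kim) // leq_add2l.
- exact: sqintegrableMl.
Qed.

Lemma cross_moment_acc_noise k i :
  cross_moment Pr (acc_noise k i) (acc_noise k i) = acc_cov i.
Proof.
have Zsq := sqintegrable_acc_noise k.
elim: i => [|i IHi] /=.
  by rewrite cross_moment_cstl ?mul0mx //; exact: sqintegrable_cst.
have PZsq := sqintegrableMl Phi (Zsq i).
rewrite cross_momentDl ?cross_momentDr ?(cross_momentDr (V1 := W _)) //;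
  try exact: sqintegrableD.
rewrite !cross_momentMl ?cross_momentMr ?IHi ?WSigma //.
rewrite [cross_moment _ (W _) _]cross_momentC !cross_moment_acc_noise_future //.
by rewrite mulmx0 trmx0 mul0mx addr0 add0r mulmxA.
Qed.

End noise_propagation.

Section receding_horizon.
Context (R : realType).
Variables (nx nu : nat) (A : 'M[R]_nx) (B : 'M[R]_(nx, nu)) (K : 'M[R]_(nu, nx)).
Variables (Q P : 'M[R]_nx) (Rw : 'M[R]_nu) (N : nat).
Local Notation Phi := (A + B *m K).
Local Notation znom := (znom A B).

Definition cost (xs : nat -> 'cV[R]_nx) (us : nat -> 'cV[R]_nu) : R :=
  qf P (xs N) + \sum_(i < N) (qf Q (xs i) + qf Rw (us i)).

Definition trace_cost (M : nat -> 'M[R]_nx) : R :=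
  \tr (P *m M N) + \sum_(i < N) (\tr (Q *m M i) + \tr (Rw *m (K *m M i *m K^T))).

Definition candidate (z : 'cV[R]_nx) (v : nat -> 'cV[R]_nu) (i : nat) :=
  if (i.+1 < N)%N then v i.+1 else K *m znom z v N.

Definition mean_state (z : 'cV[R]_nx) (v : nat -> 'cV[R]_nu) (e : 'cV[R]_nx)
    (i : nat) :=
  znom z v i + Phi ^+ i *m e.

Definition mean_input (v : nat -> 'cV[R]_nu) (e : 'cV[R]_nx) (i : nat) :=
  K *m (Phi ^+ i *m e) + v i.

Lemma error_dynamics x z v0 (w : 'cV[R]_nx) :
  A *m x + B *m (K *m (x - z) + v0) + w - (A *m z + B *m v0) =
  Phi *m (x - z) + w.
Proof.
rewrite -{1}(subrK z x); move: (x - z) => e.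
rewrite !mulmxDr mulmxDl mulmxA.
move: (A *m e) (A *m z) (B *m K *m e) (B *m v0) w => a b c f g.
by apply/matrixP => i j; rewrite !mxE; ring.
Qed.

Lemma znom_candidate z v i : (i < N)%N ->
  znom (znom z v 1) (candidate z v) i = znom z v i.+1.
Proof.
elim: i => [|i IHi] // lt_iN /=.
by rewrite IHi ?(ltn_trans _ lt_iN) // /candidate lt_iN.
Qed.

Lemma znom_candidate_last z v : (0 < N)%N ->
  znom (znom z v 1) (candidate z v) N = Phi *m znom z v N.
Proof.
move=> N0; have [n Nn] : exists n, N = n.+1 by exists N.-1; rewrite prednK.
rewrite [in LHS]Nn /= znom_candidate ?Nn // /candidate Nn ltnn.
by rewrite mulmxDl mulmxA.
Qed.

Section feasibility.
Variables (X : set 'cV[R]_nx) (U : set 'cV[R]_nu).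
Variables (Rx : nat -> set 'cV[R]_nx) (Ru : nat -> set 'cV[R]_nu).
Variables (Rf Zf : set 'cV[R]_nx).
Hypothesis RxRf : forall k, Rx k `<=` Rf.
Hypothesis RuRf : forall k, Ru k `<=` mximg K Rf.
Hypotheses (ZfX : Zf `<=` pdiff X Rf) (Zf_invariant : mximg Phi Zf `<=` Zf).
Hypothesis KZfU : mximg K Zf `<=` pdiff U (mximg K Rf).

Lemma feasible_candidate k z v : (0 < N)%N ->
  feasible A B N X U Rx Ru Zf k z v ->
  feasible A B N X U Rx Ru Zf k.+1 (znom z v 1) (candidate z v).
Proof.
move=> N0 [feas_stage feas_last]; split; last first.
  by rewrite znom_candidate_last //; apply: Zf_invariant; exists (znom z v N).
move=> i lt_iN; rewrite znom_candidate // /candidate addnS -addSn.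
case: ltnP => [lt_SiN | ge_SiN]; first exact: feas_stage.
have -> : i.+1 = N by apply/eqP; rewrite eqn_leq lt_iN.
have [Xz XzRf] := ZfX feas_last.
have [UKz UKzRf] := KZfU (ex_intro2 _ _ _ feas_last erefl).
by split; split => // b Rb; [exact: XzRf (RxRf Rb) | exact: UKzRf (RuRf Rb)].
Qed.

End feasibility.

Section lyapunov.
Hypothesis lyapunov : Phi^T *m P *m Phi - P = - (Q + K^T *m Rw *m K).

Let lyapunovE : Phi^T *m P *m Phi = P - Q - K^T *m Rw *m K.
Proof.
by move/eqP: lyapunov; rewrite subr_eq => /eqP ->; rewrite opprD addrC addrA.
Qed.

Lemma qf_closed_loop y : qf P (Phi *m y) = qf P y - qf Q y - qf Rw (K *m y).
Proof.
rewrite /qf trmx_mul -!mulmxA [Phi^T *m (P *m _)]mulmxA.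
rewrite [Phi^T *m P *m _]mulmxA.
have subE (M1 M2 : 'M[R]_1) : (M1 - M2) 0 0 = M1 0 0 - M2 0 0 by rewrite !mxE.
by rewrite lyapunovE !mulmxBl !mulmxBr !subE trmx_mul !mulmxA.
Qed.

Lemma mxtrace_closed_loop M : \tr (P *m (Phi *m M *m Phi^T)) =
  \tr (P *m M) - \tr (Q *m M) - \tr (Rw *m (K *m M *m K^T)).
Proof.
rewrite mulmxA mxtrace_mulC !mulmxA lyapunovE !mulmxBl !raddfB /=.
by rewrite -!mulmxA [\tr (K^T *m _)]mxtrace_mulC !mulmxA.
Qed.

Lemma trace_cost_pow (S : 'M[R]_nx) :
  trace_cost (fun i => Phi ^+ i *m S *m (Phi ^+ i)^T) = \tr (P *m S).
Proof.
set G := fun i => Phi ^+ i *m S *m (Phi ^+ i)^T.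
have GS i : G i.+1 = Phi *m G i *m Phi^T.
  by rewrite /G exprS -mulmxE trmx_mul !mulmxA.
have stage i : \tr (Q *m G i) + \tr (Rw *m (K *m G i *m K^T)) =
    \tr (P *m G i) - \tr (P *m G i.+1).
  by rewrite GS mxtrace_closed_loop; ring.
have G0 : G 0%N = S by rewrite /G expr0 mul1mx trmx1 mulmx1.
have sum_first : \sum_(i < N.+1) \tr (P *m G i) =
    \tr (P *m S) + \sum_(i < N) \tr (P *m G i.+1) by rewrite big_ord_recl G0.
have sum_last : \sum_(i < N.+1) \tr (P *m G i) =
    \sum_(i < N) \tr (P *m G i) + \tr (P *m G N) by rewrite big_ord_recr.
rewrite /trace_cost; under eq_bigr do rewrite stage.
rewrite sumrB -/(G N); lra.
Qed.

Lemma cost_shift xs us xs' us' : (0 < N)%N ->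
  (forall i, (i < N)%N -> xs' i = xs i.+1) -> xs' N = Phi *m xs N ->
  (forall i, (i.+1 < N)%N -> us' i = us i.+1) -> us' N.-1 = K *m xs N ->
  cost xs' us' = cost xs us - qf Q (xs 0%N) - qf Rw (us 0%N).
Proof.
move=> N0 xs_tail xs_last us_tail us_last.
have [n Nn] : exists n, N = n.+1 by exists N.-1; rewrite prednK.
have stage_tail : \sum_(i < n) (qf Q (xs' i) + qf Rw (us' i)) =
    \sum_(i < n) (qf Q (xs i.+1) + qf Rw (us i.+1)).
  by apply: eq_bigr => i _; rewrite xs_tail ?us_tail // Nn ltnS // ltnW.
rewrite /cost Nn [in LHS]big_ord_recr [in RHS]big_ord_recl /= stage_tail.
rewrite Nn /= in xs_last us_last; rewrite xs_last us_last xs_tail ?Nn //.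
rewrite qf_closed_loop; lra.
Qed.

Lemma cost_candidate z v e : (0 < N)%N ->
  cost (mean_state (znom z v 1) (candidate z v) (Phi *m e))
       (mean_input (candidate z v) (Phi *m e)) =
  cost (mean_state z v e) (mean_input v e)
  - qf Q (z + e) - qf Rw (K *m e + v 0%N).
Proof.
move=> N0.
have powS i : Phi ^+ i *m (Phi *m e) = Phi ^+ i.+1 *m e.
  by rewrite mulmxA mulmxE -exprSr.
rewrite (cost_shift N0 (xs := mean_state z v e) (us := mean_input v e)).
- by rewrite /mean_state /mean_input expr0 !mul1mx.
- by move=> i lt_iN; rewrite /mean_state znom_candidate // powS.
- rewrite /mean_state znom_candidate_last // powS exprS -mulmxE -mulmxA.
  by rewrite mulmxDr.
- by move=> i lt_iN; rewrite /mean_input /candidate lt_iN powS.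
- rewrite /mean_input /candidate prednK // ltnn powS prednK //.
  by rewrite /mean_state mulmxDr addrC.
Qed.

End lyapunov.
End receding_horizon.

Section expected_cost.
Context (R : realType) d (T : measurableType d) (Pr : probability T R).
Variables (nx nu : nat) (A : 'M[R]_nx) (B : 'M[R]_(nx, nu)) (K : 'M[R]_(nu, nx)).
Variables (Q P : 'M[R]_nx) (Rw : 'M[R]_nu) (N : nat).
Variables (W : nat -> T -> 'cV[R]_nx) (Sigma : 'M[R]_nx).
Hypothesis Wsq : forall j, sqintegrable Pr (W j).
Hypothesis W0 : forall j, mean Pr (W j) = 0.
Hypotheses (WSigma : forall j, cross_moment Pr (W j) (W j) = Sigma).
Hypothesis Wuncorr : forall j l, j != l -> cross_moment Pr (W j) (W l) = 0.
Local Notation Phi := (A + B *m K).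
Local Notation L1 := (Lfun Pr 1).
Local Notation E := (expectR Pr).
Local Notation cost := (cost Q P Rw N).
Local Notation trace_cost := (trace_cost K Q P Rw N).
Local Notation mean_state := (mean_state A B K).
Local Notation mean_input := (mean_input A B K).
Local Notation Z := (acc_noise W Phi).

Section perturbed.
Variables (xs : nat -> 'cV[R]_nx) (us : nat -> 'cV[R]_nu).
Variable Y : nat -> T -> 'cV[R]_nx.
Hypothesis Ysq : forall i, sqintegrable Pr (Y i).

Let perturbed_cost w :=
  cost (fun i => xs i + Y i w) (fun i => us i + K *m Y i w).

Lemma Lfun1_perturbed_cost : perturbed_cost \in L1.
Proof.
have csq := sqintegrable_cst Pr.
apply: LfunD => //; first by apply: Lfun1_qf; exact: sqintegrableD.
apply: Lfun_sum => // i; apply: LfunD => //.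
  by apply: Lfun1_qf; exact: sqintegrableD.
by apply: Lfun1_qf; apply: sqintegrableD => //; exact: sqintegrableMl.
Qed.

Lemma expectR_perturbed_cost (M : nat -> 'M[R]_nx) :
  (forall i, mean Pr (Y i) = 0) ->
  (forall i, cross_moment Pr (Y i) (Y i) = M i) ->
  E perturbed_cost = cost xs us + trace_cost M.
Proof.
move=> Y0 YM; have csq := sqintegrable_cst Pr.
have KYsq i := sqintegrableMl K (Ysq i).
have KY0 i : mean Pr (fun w => K *m Y i w) = 0 by rewrite meanMl // Y0 mulmx0.
have Lfun1_stage i :
    (fun w => qf Q (xs i + Y i w) + qf Rw (us i + K *m Y i w)) \in L1.
  by apply: LfunD => //; apply: Lfun1_qf; exact: sqintegrableD.
have stageE i : E (fun w => qf Q (xs i + Y i w) + qf Rw (us i + K *m Y i w)) =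
    qf Q (xs i) + qf Rw (us i) +
    (\tr (Q *m M i) + \tr (Rw *m (K *m M i *m K^T))).
  have [Yisq KYisq] := (Ysq i, KYsq i).
  rewrite expectRD; try by apply: Lfun1_qf; exact: sqintegrableD.
  rewrite !expectR_qf_centered // cross_momentMl // cross_momentMr // YM.
  by rewrite !mulmxA addrACA.
rewrite /perturbed_cost /cost expectRD ?Lfun_sum //; last first.
  by apply: Lfun1_qf; exact: sqintegrableD.
rewrite expectR_qf_centered // YM expectR_sum //.
under eq_bigr do rewrite stageE.
rewrite /trace_cost big_split /=; ring.
Qed.

End perturbed.

Lemma epred_acc_noise k e0 w i :
  epred A B K W k e0 w i = Phi ^+ i *m e0 + Z k i w.
Proof.
elim: i => [|i IHi] /=; first by rewrite expr0 mul1mx addr0.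
by rewrite IHi mulmxDr addrA exprS -mulmxE mulmxA.
Qed.

Lemma Jcost_mean k x z v : Jcost A B K Q P Rw N W Pr k x z v =
  (cost (mean_state z v (x - z)) (mean_input v (x - z)) +
   trace_cost (acc_cov Sigma Phi))%:E.
Proof.
have Zsq := sqintegrable_acc_noise Phi Wsq k.
have sampleE : sample_cost A B K Q P Rw N W k x z v = fun w =>
    cost (fun i => mean_state z v (x - z) i + Z k i w)
         (fun i => mean_input v (x - z) i + K *m Z k i w).
  apply/funext => w; rewrite [LHS]/=; congr cost; apply/funext => i.
    by rewrite epred_acc_noise /mean_state addrA.
  by rewrite epred_acc_noise /mean_input mulmxDr addrAC.
rewrite /Jcost sampleE integral_expectR; last exact: Lfun1_perturbed_cost.
rewrite (expectR_perturbed_cost _ _ Zsq (M := acc_cov Sigma Phi)) // => i.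
  exact: mean_acc_noise.
exact: cross_moment_acc_noise.
Qed.

Lemma integral_cost_next k z v e c :
  Phi^T *m P *m Phi - P = - (Q + K^T *m Rw *m K) ->
  (\int[Pr]_w
     (cost (mean_state z v (e + W k w)) (mean_input v (e + W k w)) + c)%:E =
   (cost (mean_state z v e) (mean_input v e) + \tr (P *m Sigma) + c)%:E)%E.
Proof.
move=> lyapunov.
have Ysq i := sqintegrableMl (Phi ^+ i) (Wsq k).
pose f w := cost (fun i => mean_state z v e i + Phi ^+ i *m W k w)
                 (fun i => mean_input v e i + K *m (Phi ^+ i *m W k w)).
have nextE w :
    cost (mean_state z v (e + W k w)) (mean_input v (e + W k w)) = f w.
  congr cost; apply/funext => i; first by rewrite /mean_state mulmxDr addrA.
  by rewrite /mean_input !mulmxDr addrAC.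
transitivity (\int[Pr]_w ((f \+ cst c) w)%:E)%E.
  by apply: eq_integral => w _; rewrite nextE.
have fL1 := Lfun1_perturbed_cost (mean_state z v e) (mean_input v e) Ysq.
rewrite integral_expectR; last exact/LfunD/Lfun_cst.
rewrite expectRD ?expectR_cst //; last exact: Lfun_cst.
rewrite (expectR_perturbed_cost _ _ Ysq
  (M := fun i => Phi ^+ i *m Sigma *m (Phi ^+ i)^T)).
- by rewrite trace_cost_pow.
- by move=> i; rewrite meanMl // W0 mulmx0.
- by move=> i; rewrite cross_momentMl // cross_momentMr // WSigma mulmxA.
Qed.

End expected_cost.

Section optimal_cost.
Context (R : realType) d (T : measurableType d) (Pr : probability T R).
Variables (nx nu : nat) (A : 'M[R]_nx) (B : 'M[R]_(nx, nu)) (K : 'M[R]_(nu, nx)).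
Variables (Q P : 'M[R]_nx) (Rw : 'M[R]_nu) (N : nat) (W : nat -> T -> 'cV[R]_nx).
Variables (X : set 'cV[R]_nx) (U : set 'cV[R]_nu).
Variables (Rx : nat -> set 'cV[R]_nx) (Ru : nat -> set 'cV[R]_nu).
Variable Zf : set 'cV[R]_nx.
Local Notation feasible := (feasible A B N X U Rx Ru Zf).
Local Notation Jcost := (Jcost A B K Q P Rw N W Pr).
Local Notation Jstar := (Jstar A B K Q P Rw N W Pr X U Rx Ru Zf).

Lemma Jstar_le_Jcost k x z v :
  feasible k z v -> (Jstar k x z <= Jcost k x z v)%E.
Proof. by move=> feas; apply: ereal_inf_lbound; exists v. Qed.

Lemma Jstar_optimal k x z vstar : feasible k z vstar ->
    (forall v, feasible k z v -> (Jcost k x z vstar <= Jcost k x z v)%E) ->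
  Jstar k x z = Jcost k x z vstar.
Proof.
move=> feas opt; apply/eqP; rewrite eq_le Jstar_le_Jcost //=.
by apply: le_ereal_inf_tmp => _ [v feas_v <-]; exact: opt.
Qed.

End optimal_cost.

Theorem theorem3 (R : realType) (d : measure_display) (T : measurableType d)
  (Pr : probability T R)
  (nx nu : nat) (A : 'M[R]_nx) (B : 'M[R]_(nx, nu)) (K : 'M[R]_(nu, nx))
  (Q P : 'M[R]_nx) (Ru_w : 'M[R]_nu) (Sigma : 'M[R]_nx) (N : nat)
  (X : set 'cV[R]_nx) (U : set 'cV[R]_nu)
  (Rx : nat -> set 'cV[R]_nx) (Ru : nat -> set 'cV[R]_nu)
  (Rf : set 'cV[R]_nx) (Zf : set 'cV[R]_nx)
  (W : nat -> T -> 'cV[R]_nx) :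
  (* standing assumptions of the setting *)
  (0 < N)%N ->
  schur_stable (A + B *m K) ->
  convex_set X -> convex_set U ->
  (forall k, Rx k `<=` Rf) ->
  (forall k, Ru k `<=` mximg K Rf) ->
  Zf `<=` pdiff X Rf ->
  mximg (A + B *m K) Zf `<=` Zf ->
  mximg K Zf `<=` pdiff U (mximg K Rf) ->
  (* i.i.d. zero-mean disturbances with covariance Sigma *)
  (forall k, rand_vec (W k)) ->
  mutually_independent Pr W ->
  identically_distributed Pr W ->
  mean0_cov Pr W Sigma ->
  (* quadratic costs *)
  psd Q -> pd Ru_w ->
  (A + B *m K)^T *m P *m (A + B *m K) - P = - (Q + K^T *m Ru_w *m K) ->
  (* one step of the closed loop from time k at (x(k), z(k)) = (x, z) *)
  forall (k : nat) (x z : 'cV[R]_nx) (vstar : nat -> 'cV[R]_nu),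
    feasible A B N X U Rx Ru Zf k z vstar ->
    (forall v, feasible A B N X U Rx Ru Zf k z v ->
       (Jcost A B K Q P Ru_w N W Pr k x z vstar
          <= Jcost A B K Q P Ru_w N W Pr k x z v)%E) ->
    let u := K *m (x - z) + vstar 0%N in
    let znext := A *m z + B *m vstar 0%N in
    ((\int[Pr]_w (Jstar A B K Q P Ru_w N W Pr X U Rx Ru Zf k.+1
                    (A *m x + B *m u + W k w) znext))
       - Jstar A B K Q P Ru_w N W Pr X U Rx Ru Zf k x z
     <= (- qf Q x - qf Ru_w u + \tr (P *m Sigma))%:E)%E.
Proof.
move=> N0 _ _ _ RxRf RuRf ZfX Zf_inv KZfU Wrv Wind _ Wcov _ _ lyapunov.
move=> k x z vstar feas opt; rewrite /is_true; cbv zeta.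
set u := K *m (x - z) + vstar 0%N; set znext := A *m z + B *m vstar 0%N.
have Wsq := sqintegrable_disturbance Wrv Wcov.
have W0 := mean_disturbance Wcov.
have WSigma := cross_moment_disturbance Wcov.
have Wuncorr := cross_moment_disturbance_indep Wrv Wcov Wind.
have JcostE := Jcost_mean A B K Q P Ru_w N Wsq W0 WSigma Wuncorr.
set e := x - z; set vs := candidate A B K N z vstar.
set Mcost := trace_cost K Q P Ru_w N (acc_cov Sigma (A + B *m K)).
have next_error w :
    A *m x + B *m u + W k w - znext = (A + B *m K) *m e + W k w.
  exact: error_dynamics.
have next_le w : (Jstar A B K Q P Ru_w N W Pr X U Rx Ru Zf k.+1
      (A *m x + B *m u + W k w) znext <=
    (cost Q P Ru_w N (mean_state A B K znext vs ((A + B *m K) *m e + W k w))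
       (mean_input A B K vs ((A + B *m K) *m e + W k w)) + Mcost)%:E)%E.
  have feas_next := feasible_candidate RxRf RuRf ZfX Zf_inv KZfU N0 feas.
  apply: le_trans (Jstar_le_Jcost Pr K Q P Ru_w W _ feas_next) _.
  by rewrite JcostE next_error.
rewrite (Jstar_optimal feas opt) JcostE.
apply: le_trans (leeB (le_integral_pointwise Pr next_le) (lexx _)) _.
rewrite (integral_cost_next N Wsq W0 WSigma) //.
rewrite -EFinB lee_fin cost_candidate //.
rewrite /e /u /Mcost [z + (x - z)]addrC subrK; lra.
Qed.
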